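(* Let $b>3$ be a strongly symmetric base. Then $b+1$ is prime.
   Context: Let $b>2$ be an integer base and write $(d_k,d_{k-1},\ldots,d_0)_b=\sum_{j=0}^k d_j b^j$ with $0\le d_j<b$. A natural number $p=(d_k,\ldots,d_0)_b$ with $d_k\neq 0$ and $d_0\neq 0$ that is not a base-$b$ palindrome is an $(n,b)$-palintiple if $(d_k,\ldots,d_0)_b=n\,(d_0,d_1,\ldots,d_k)_b$ for an integer $n$ with $1<n<b$; a base-$b$ palintiple is an $(n,b)$-palintiple for some such $n$. Its carries $c_0,\ldots,c_{k+1}$ are the carries arising in the base-$b$ multiplication of $(d_0,\ldots,d_k)_b$ by $n$: $c_0=0$ and $n d_{k-j}+c_j=d_j+b\,c_{j+1}$ for $0\le j\le k$ (so $c_{k+1}=0$). The palintiple is symmetric if $c_j=c_{k-j}$ for all $0\le j\le k$. A base $b$ is strongly symmetric if every base-$b$ palintiple (for every $n$ with $1<n<b$) is symmetric. *)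

From mathcomp Require Import all_boot.
Set Implicit Arguments. Unset Strict Implicit. Unset Printing Implicit Defensive.

(* Digits are given by a function d : nat -> nat, with d j the j-th base-b
   digit (d 0 least significant) of a (k+1)-digit number; only d 0..d k matter. *)

Definition digval (b k : nat) (d : nat -> nat) : nat :=
  \sum_(j < k.+1) d j * b ^ j.

Definition revdigval (b k : nat) (d : nat -> nat) : nat :=
  \sum_(j < k.+1) d (k - j) * b ^ j.

Definition valid_digits (b k : nat) (d : nat -> nat) : Prop :=
  forall j, j <= k -> d j < b.

Definition is_palindrome (k : nat) (d : nat -> nat) : Prop :=
  forall j, j <= k -> d j = d (k - j).

Definition palintiple (n b k : nat) (d : nat -> nat) : Prop :=
  (1 < n < b) /\ valid_digits b k d /\ d k <> 0 /\ d 0 <> 0 /\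
  ~ is_palindrome k d /\ digval b k d = n * revdigval b k d.

(* carries of the multiplication of (d_0,...,d_k)_b by n:
   c_0 = 0 and n d_{k-j} + c_j = d_j + b c_{j+1}, i.e.
   c_{j+1} = (n d_{k-j} + c_j) div b. *)
Fixpoint carry (n b k : nat) (d : nat -> nat) (j : nat) : nat :=
  match j with
  | 0 => 0
  | j'.+1 => (n * d (k - j') + carry n b k d j') %/ b
  end.

Definition symmetric_palintiple (n b k : nat) (d : nat -> nat) : Prop :=
  forall j, j <= k -> carry n b k d j = carry n b k d (k - j).

Definition strongly_symmetric (b : nat) : Prop :=
  forall n k (d : nat -> nat), palintiple n b k d -> symmetric_palintiple n b k d.

(* If b + 1 = (n + 1) m with n, m > 1, then the two-digit number
   (n m - 1, m - 1)_b equals n times its reversal (m - 1, n m - 1)_b, both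
   sides being (n m - 1) b + m - 1.  Its first carry n (n m - 1) div b is
   positive while c_0 = 0, so this palintiple is not symmetric.  Every
   composite b + 1 > 4 has such a factorization. *)

From mathcomp Require Import all_boot.
From mathcomp Require Import zify.

Set Implicit Arguments.
Unset Strict Implicit.

Definition two_digit_palintiple (n m : nat) (j : nat) : nat :=
  if j == 0 then m - 1 else n * m - 1.

Section TwoDigitPalintiple.

Variables b n m : nat.
Hypotheses (n_gt1 : 1 < n) (m_gt1 : 1 < m) (b_factor : b.+1 = n.+1 * m).

Let d := two_digit_palintiple n m.

Lemma two_digit_palintipleP : palintiple n b 1 d.
Proof.
rewrite /palintiple /valid_digits /is_palindrome /digval /revdigval /d.
rewrite /two_digit_palintiple; split; first by apply/andP; split; nia.
split; first by move=> [|j] _ /=; nia.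
do 2 (split; first by rewrite /=; nia).
split; first by move/(_ 0 isT) => /=; nia.
by rewrite !big_ord_recr !big_ord0 /=; nia.
Qed.

Lemma two_digit_palintiple_asymmetric : ~ symmetric_palintiple n b 1 d.
Proof.
move/(_ 0 isT); rewrite /= /d /two_digit_palintiple /= addn0.
have carry1_gt0 : 0 < n * (n * m - 1) %/ b by rewrite divn_gt0; nia.
by lia.
Qed.

End TwoDigitPalintiple.

Lemma not_prime_factorization (N : nat) : 4 < N -> ~~ prime N ->
  exists n m, [/\ 1 < n, 1 < m & N = n.+1 * m].
Proof.
move=> N_gt4 /primePn [|[p /andP [p_gt1 p_ltN] /dvdnP [q N_eq]]]; first lia.
have q_gt1 : 1 < q by nia.
have [p_ge3 | p_lt3] := leqP 3 p.
  by exists p.-1, q; split; [lia | done | rewrite N_eq mulnC; congr (_ * _); lia].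
by exists q.-1, p; split; [nia | done | rewrite N_eq; congr (_ * _); lia].
Qed.

Theorem theorem2 (b : nat) : 3 < b -> strongly_symmetric b -> prime b.+1.
Proof.
move=> b_gt3 b_sym; apply/negPn/negP => /not_prime_factorization.
case=> [|n [m [n_gt1 m_gt1 b_factor]]]; first lia.
apply: (two_digit_palintiple_asymmetric n_gt1 m_gt1 b_factor).
exact/b_sym/(two_digit_palintipleP n_gt1 m_gt1 b_factor).
Qed.
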